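(* Let $G$ be a finite group. The minimal cardinality of a generating set of $G$ is at most the minimal length $\ell$ of a chain of subgroups $\{e\}=H_0<H_1<\dots<H_\ell=G$ such that every interval $[H_i,H_{i+1}]$ of the subgroup lattice is top Boolean.
   Context: For subgroups $H\subseteq K$ of $G$, $[H,K]$ is the lattice of subgroups between $H$ and $K$. The top interval of a finite lattice $L$ is $[t,\hat 1]$ where $t$ is the meet of all coatoms (maximal elements of $L\setminus\{\hat 1\}$); $L$ is top Boolean if its top interval is a Boolean lattice (distributive, bounded, every element has a unique complement). *)

From mathcomp Require Import all_boot all_fingroup.
Set Implicit Arguments. Unset Strict Implicit. Unset Printing Implicit Defensive.
Local Open Scope group_scope.

Section TopBoolean.
Variable gT : finGroupType.
Implicit Types H K M A B C : {group gT}.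

Definition in_interval H K M : bool := (H \subset M) && (M \subset K).

Definition coatom H K M : bool :=
  [&& in_interval H K M, M :!=: K &
      [forall M' : {group gT},
         [&& in_interval H K M', M \subset M' & M' :!=: K] ==> (M' :==: M)]].

(* meet of all coatoms of [H, K] (taken inside K, so it is K when there are none) *)
Definition top_bottom H K : {set gT} :=
  K :&: \bigcap_(M : {group gT} | coatom H K M) (M : {set gT}).

Definition in_top H K M : bool := (top_bottom H K \subset M) && (M \subset K).

(* The lattice [t, K] (meet = intersection, join = generated subgroup, bottom t,
   top K) is Boolean: distributive, and every element has a unique complement. *)
Definition top_boolean H K : Prop :=
  (forall A B C, in_top H K A -> in_top H K B -> in_top H K C ->
     A :&: (B <*> C) = (A :&: B) <*> (A :&: C)) /\
  (forall A, in_top H K A ->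
     exists B, [/\ in_top H K B, A :&: B = top_bottom H K, A <*> B = K &
       forall B', in_top H K B' -> A :&: B' = top_bottom H K -> A <*> B' = K ->
         B' = B]).
End TopBoolean.

From mathcomp Require Import all_boot all_fingroup.
Set Implicit Arguments. Unset Strict Implicit. Unset Printing Implicit Defensive.
Local Open Scope group_scope.

(* In a top Boolean interval [H, K], a complement B of a coatom M satisfies
   B = B :&: (M <*> M') = (B :&: M) <*> (B :&: M') <= M' for every other
   coatom M', so B contains an element b_M lying outside M but inside all
   other coatoms. The product g of the b_M lies in no coatom, hence
   <<g |: H>> = K. Climbing the chain, one new generator per step suffices. *)

Section Coatoms.
Variables (gT : finGroupType) (H K : {group gT}).

Lemma coatom_in_top (M : {group gT}) : coatom H K M -> in_top H K M.
Proof.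
move=> cM; have /and3P[/andP[_ sMK] _ _] := cM.
rewrite /in_top sMK andbT /top_bottom subIset // orbC.
by rewrite (bigcap_inf M (P := coatom H K)).
Qed.

Lemma coatom_joing (M M' : {group gT}) :
  coatom H K M -> coatom H K M' -> M != M' -> M <*> M' = K.
Proof.
move=> cM cM' neqMM'.
have /and3P[/andP[sHM sMK] neqMK /forallP maxM] := cM.
have /and3P[/andP[_ sM'K] _ /forallP maxM'] := cM'.
apply/eqP; apply: contraNT neqMM' => neqJK.
have sJK : M <*> M' \subset K by apply/joing_subP.
have sHJ : H \subset M <*> M' by rewrite (subset_trans sHM) ?joing_subl.
have /implyP/(_ _)/eqP eqJM := maxM (M <*> M')%G.
have sM'M : M' \subset M.
  by rewrite -eqJM ?joing_subr // /in_interval sHJ sJK joing_subl.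
have /implyP/(_ _)/eqP eqMM' := maxM' M.
by rewrite eq_sym -val_eqE /= eqMM' // /in_interval sHM sMK sM'M.
Qed.

Lemma sub_coatom (L : {group gT}) :
  in_interval H K L -> L :!=: K -> exists2 M, coatom H K M & L \subset M.
Proof.
move=> iL neqLK.
pose P (M : {group gT}) := in_interval H K M && (M :!=: K).
have [M maxM sLM] := @maxgroup_exists _ P L (introT andP (conj iL neqLK)).
have /maxgroupP[/andP[iM neqMK] maxPM] := maxM.
exists M => //; rewrite /coatom iM neqMK /=.
apply/forallP => M'; apply/implyP => /and3P[iM' sMM' neqM'K].
by rewrite (maxPM M') // /P iM' neqM'K.
Qed.

Hypothesis tbHK : top_boolean H K.

Lemma coatom_separating_elt (M : {group gT}) :
  coatom H K M ->
  exists b, [/\ b \in K, b \notin M &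
    forall M', coatom H K M' -> M' != M -> b \in M'].
Proof.
move=> cM; have [distr compl] := tbHK.
have tM := coatom_in_top cM.
have /and3P[_ neqMK _] := cM.
have [B [tB capMB joinMB _]] := compl M tM.
have /andP[_ sBK] := tB.
have /subsetPn[b Bb notMb] : ~~ (B \subset M).
  by apply: contra neqMK => /joing_idPl eqMB; rewrite -joinMB eqMB.
exists b; split => // [|M' cM' neqM'M]; first exact: (subsetP sBK).
have tM' := coatom_in_top cM'.
have /andP[sTM' _] := tM'.
have := distr B M M' tB tM tM'.
rewrite coatom_joing // 1?eq_sym // (setIidPl sBK) setIC capMB => eqB.
have sBM' : B \subset M'.
  by rewrite eqB joingE gen_subG subUset sTM' subsetIr.
exact: (subsetP sBM').
Qed.

Lemma elt_avoiding_coatoms (s : seq {group gT}) :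
  uniq s -> all (coatom H K) s ->
  exists2 g, g \in K & forall M, coatom H K M -> (g \in M) = (M \notin s).
Proof.
elim: s => [|M0 s IHs] /=; first by exists 1 => // M _; rewrite group1.
case/andP=> notM0s uniq_s /andP[cM0 cs].
have [g Kg gM] := IHs uniq_s cs.
have [b [Kb notM0b bM]] := coatom_separating_elt cM0.
exists (g * b) => [|M cM]; first by rewrite groupM.
rewrite in_cons; have [->|neqMM0] := eqVneq M M0.
  by rewrite groupMl ?gM // (negbTE notM0b).
by rewrite groupMr ?gM ?bM.
Qed.

Lemma top_boolean_gen1 : H \subset K -> exists g, <<g |: H>> = K.
Proof.
move=> sHK.
have all_coatoms : all (coatom H K) (enum (coatom H K)).
  by apply/allP => M; rewrite mem_enum.
have [g Kg gM] := elt_avoiding_coatoms (enum_uniq _) all_coatoms.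
exists g; pose L := <<g |: H>>%G.
have sLK : L \subset K by rewrite gen_subG subUset sub1set Kg sHK.
have sHL : H \subset L by rewrite sub_gen // subsetUr.
apply/eqP; apply: contraT => neqLK.
have [M cM sLM] := sub_coatom (introT andP (conj sHL sLK)) neqLK.
have gL : g \in L by rewrite mem_gen // setU11.
by have := gM M cM; rewrite (subsetP sLM) // mem_enum -[M \in _]/(coatom H K M) cM.
Qed.

End Coatoms.

Lemma gen_chain_card (gT : finGroupType) (H : nat -> {group gT}) (l : nat) :
  H 0%N = 1%G ->
  (forall i, (i < l)%N -> exists g, <<g |: H i>> = H i.+1) ->
  exists S : {set gT}, <<S>> = H l /\ (#|S| <= l)%N.
Proof.
move=> H0; elim: l => [|l IHl] stepH.
  by exists set0; rewrite gen0 H0 cards0.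
have [S [genS cardS]] := IHl (fun i il => stepH i (ltnW il)).
have [g genHl] := stepH l (ltnSn l).
exists (g |: S); split; first by rewrite -genHl -genS -!joingE joing_idr.
by rewrite cardsU1 -add1n leq_add ?leq_b1.
Qed.

Theorem corollary6p2 (gT : finGroupType) (G : {group gT})
    (l : nat) (H : nat -> {group gT}) :
  H 0%N = 1%G :> {group gT} ->
  H l = G ->
  (forall i, (i < l)%N -> H i \proper H i.+1) ->
  (forall i, (i < l)%N -> top_boolean (H i) (H i.+1)) ->
  exists S : {set gT}, <<S>>%g = G /\ (#|S| <= l)%N.
Proof.
move=> H0 Hl properH tbH.
have stepH i : (i < l)%N -> exists g, <<g |: H i>> = H i.+1.
  by move=> il; apply: top_boolean_gen1 (tbH i il) (proper_sub (properH i il)).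
by rewrite -Hl; apply: gen_chain_card.
Qed.
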